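(* Assume Hypotheses (LD) and (LD0). Then for every $\delta_0>0$ there exists an open neighborhood $V_0$ of $M_0$ such that $$\lim_{\varepsilon\to0}\frac{\beta_{\delta_0}(\varepsilon)}{\inf_{x\in V_0}p^\varepsilon(x,M_0)}=0.$$
   Context: Setting. Let $M\subset\mathbb{R}^d$ be closed; all topological notions are relative to $M$. Let $F:M\to M$ be continuous with $\|F\|:=\sup_{x\in M}\|F(x)\|<\infty$. For $A\subset M$ and $\delta>0$, put $N^\delta(A)=\{x\in M:\inf_{y\in A}\|x-y\|<\delta\}$, and let $d(x,y)=\max_i|x_i-y_i|$. Let $\{X^\varepsilon\}_{\varepsilon>0}$ be a family of time-homogeneous Markov chains on $M$ with transition kernels $p^\varepsilon(x,\Gamma)$. Put $\beta_\delta(\varepsilon):=\sup_{x\in M}p^\varepsilon(x,M\setminus N^\delta(F(x)))$. Assume $M=M_0\cup M_1$ (disjoint), where $M_0$ is closed, $F(M_0)\subseteq M_0$, $F(M_1)\subseteq M_1$, and $p^\varepsilon(x,M_1)=0$ for all $\varepsilon>0$ and $x\in M_0$. Hypothesis (LD). There is $\rho:M\times M\to[0,+\infty]$ such that: (i) $\rho$ is continuous on $M_1\times M$; (ii) $\rho(x,y)=0$ iff $y=F(x)$; (iii) for every $\beta>0$, $\inf\{\rho(x,y):x,y\in M,\ d(F(x),y)>\beta\}>0$; (iv) lower bound: for every compact $K\subset M_1$, every open ball $U$ of $M$ and every $\eta>0$, there is $\varepsilon_0>0$ such that $\varepsilon\log p^\varepsilon(x,U)\ge-\inf_{y\in U}\rho(x,y)-\eta$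 for all $x\in K$ and $\varepsilon<\varepsilon_0$; (v) upper bound: for every closed $C\subset M$ and every $\eta>0$, there is $\varepsilon_0>0$ such that $\varepsilon\log p^\varepsilon(x,C)\le-\inf_{y\in C}\rho(x,y)+\eta$ for all $x\in M$ and $\varepsilon<\varepsilon_0$. Hypothesis (LD0). For every $c>0$ there is an open neighborhood $V_0$ of $M_0$ with $\liminf_{\varepsilon\to0}\inf_{x\in V_0}\varepsilon\log p^\varepsilon(x,M_0)\ge-c$. *)

From Stdlib Require Fin.
From Stdlib Require Import Reals Lra Classical List.
Open Scope R_scope.

Definition Rd (d : nat) := Fin.t d -> R.
Definition set (d : nat) := Rd d -> Prop.

Fixpoint sumF (n : nat) : (Fin.t n -> R) -> R :=
  match n with
  | O => fun _ => 0
  | S m => fun f => f Fin.F1 + sumF m (fun i => f (Fin.FS i))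
  end.

Fixpoint maxF (n : nat) : (Fin.t n -> R) -> R :=
  match n with
  | O => fun _ => 0
  | S m => fun f => Rmax (f Fin.F1) (maxF m (fun i => f (Fin.FS i)))
  end.

Definition enorm {d} (x : Rd d) : R := sqrt (sumF d (fun i => (x i) ^ 2)).
Definition dist {d} (x y : Rd d) : R := enorm (fun i => x i - y i).
Definition dmax {d} (x y : Rd d) : R := maxF d (fun i => Rabs (x i - y i)).

Definition open_set {d} (U : set d) : Prop :=
  forall x, U x -> exists r, 0 < r /\ forall y, dist x y < r -> U y.
Definition closed_set {d} (C : set d) : Prop :=
  forall x, (forall r, 0 < r -> exists y, C y /\ dist x y < r) -> C x.
Definition compact {d} (K : set d) : Prop :=
  forall (I : Type) (U : I -> set d),
    (forall i, open_set (U i)) ->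
    (forall x, K x -> exists i, U i x) ->
    exists l : list I, forall x, K x -> exists i, In i l /\ U i x.

Definition rel_open {d} (M U : set d) : Prop :=
  (forall x, U x -> M x) /\
  forall x, U x -> exists r, 0 < r /\ forall y, M y -> dist x y < r -> U y.
Definition rel_closed {d} (M C : set d) : Prop :=
  (forall x, C x -> M x) /\
  forall x, M x -> (forall r, 0 < r -> exists y, C y /\ dist x y < r) -> C x.
Definition open_ball {d} (M U : set d) : Prop :=
  exists c r, M c /\ 0 < r /\ forall y, U y <-> (M y /\ dist c y < r).
Definition Ndelta {d} (M : set d) (delta : R) (A : set d) : set d :=
  fun x => M x /\ exists y, A y /\ dist x y < delta.

Inductive borel {d} : set d -> Prop :=
| borel_open U : open_set U -> borel U
| borel_compl A : borel A -> borel (fun x => ~ A x)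
| borel_union (A : nat -> set d) : (forall n, borel (A n)) -> borel (fun x => exists n, A n x)
| borel_ext A B : (forall x, A x <-> B x) -> borel A -> borel B.

Inductive ER := Fin (r : R) | PInf | MInf.
Definition ER_le (a b : ER) : Prop :=
  match a, b with
  | MInf, _ => True
  | _, PInf => True
  | Fin x, Fin y => x <= y
  | _, _ => False
  end.
Definition ER_lt (a b : ER) : Prop := ER_le a b /\ a <> b.
(** infimum in [-oo,+oo] (inf of the empty set is +oo) *)
Definition is_inf_ER (P : ER -> Prop) (m : ER) : Prop :=
  (forall v, P v -> ER_le m v) /\
  (forall m', (forall v, P v -> ER_le m' v) -> ER_le m' m).
Definition ER_negsub (m : ER) (eta : R) : ER :=
  match m with Fin r => Fin (- r - eta) | PInf => MInf | MInf => PInf end.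
Definition ER_negadd (m : ER) (eta : R) : ER :=
  match m with Fin r => Fin (- r + eta) | PInf => MInf | MInf => PInf end.
Definition epslog (eps p : R) : ER :=
  if Rlt_dec 0 p then Fin (eps * ln p) else MInf.

Definition is_glb_R (E : R -> Prop) (m : R) : Prop :=
  (forall v, E v -> m <= v) /\ (forall m', (forall v, E v -> m' <= v) -> m' <= m).

Definition setting {d} (M M0 M1 : set d) (F : Rd d -> Rd d) : Prop :=
  closed_set M /\
  (forall x, M x -> M (F x)) /\
  (forall x, M x -> forall e, 0 < e -> exists dl, 0 < dl /\
      forall y, M y -> dist x y < dl -> dist (F x) (F y) < e) /\
  (exists B, forall x, M x -> enorm (F x) <= B) /\
  (forall x, M x <-> (M0 x \/ M1 x)) /\
  (forall x, M0 x -> M1 x -> False) /\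
  rel_closed M M0 /\
  (forall x, M0 x -> M0 (F x)) /\
  (forall x, M1 x -> M1 (F x)).

(** p eps x A : transition kernel of X^eps; for each eps>0 and x in M,
    a probability measure on the Borel sets of M. *)
Definition markov_kernel {d} (M : set d) (p : R -> Rd d -> set d -> R) : Prop :=
  forall eps x, 0 < eps -> M x ->
    (forall A, p eps x A = p eps x (fun y => M y /\ A y)) /\
    (forall A B, (forall y, M y -> (A y <-> B y)) -> p eps x A = p eps x B) /\
    (forall A, borel A -> 0 <= p eps x A) /\
    p eps x M = 1 /\
    (forall A : nat -> set d, (forall n, borel (A n)) ->
       (forall n m y, n <> m -> A n y -> A m y -> ~ M y) ->
       infinite_sum (fun n => p eps x (A n)) (p eps x (fun y => exists n, A n y))).

Definition is_beta {d} (M : set d) (F : Rd d -> Rd d) (p : R -> Rd d -> set d -> R)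
  (delta eps b : R) : Prop :=
  is_lub (fun v => exists x, M x /\
            v = p eps x (fun y => M y /\ ~ Ndelta M delta (fun z => z = F x) y)) b.

Definition ER_cont_at {d} (M M1 : set d) (rho : Rd d -> Rd d -> ER) (x y : Rd d) : Prop :=
  match rho x y with
  | Fin v => forall e, 0 < e -> exists dl, 0 < dl /\ forall x' y', M1 x' -> M y' ->
       dist x x' < dl -> dist y y' < dl -> exists v', rho x' y' = Fin v' /\ Rabs (v' - v) < e
  | PInf => forall N, exists dl, 0 < dl /\ forall x' y', M1 x' -> M y' ->
       dist x x' < dl -> dist y y' < dl -> ER_lt (Fin N) (rho x' y')
  | MInf => forall N, exists dl, 0 < dl /\ forall x' y', M1 x' -> M y' ->
       dist x x' < dl -> dist y y' < dl -> ER_lt (rho x' y') (Fin N)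
  end.

Definition hyp_LD {d} (M M0 M1 : set d) (F : Rd d -> Rd d)
  (p : R -> Rd d -> set d -> R) (rho : Rd d -> Rd d -> ER) : Prop :=
  (forall x y, M x -> M y -> ER_le (Fin 0) (rho x y)) /\
  (forall x y, M1 x -> M y -> ER_cont_at M M1 rho x y) /\
  (forall x y, M x -> M y -> (rho x y = Fin 0 <-> y = F x)) /\
  (forall beta, 0 < beta -> forall m,
     is_inf_ER (fun v => exists x y, M x /\ M y /\ dmax (F x) y > beta /\ v = rho x y) m ->
     ER_lt (Fin 0) m) /\
  (forall K, compact K -> (forall x, K x -> M1 x) ->
   forall U, open_ball M U -> forall eta, 0 < eta ->
   exists eps0, 0 < eps0 /\ forall eps, 0 < eps < eps0 -> forall x, K x ->
   forall m, is_inf_ER (fun v => exists y, U y /\ v = rho x y) m ->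
   ER_le (ER_negsub m eta) (epslog eps (p eps x U))) /\
  (forall C, rel_closed M C -> forall eta, 0 < eta ->
   exists eps0, 0 < eps0 /\ forall eps, 0 < eps < eps0 -> forall x, M x ->
   forall m, is_inf_ER (fun v => exists y, C y /\ v = rho x y) m ->
   ER_le (epslog eps (p eps x C)) (ER_negadd m eta)).

Definition hyp_LD0 {d} (M M0 : set d) (p : R -> Rd d -> set d -> R) : Prop :=
  forall c, 0 < c -> exists V0, rel_open M V0 /\ (forall x, M0 x -> V0 x) /\
    forall a, a < - c -> exists eps0, 0 < eps0 /\ forall eps, 0 < eps < eps0 ->
      forall m, is_inf_ER (fun v => exists x, V0 x /\ v = epslog eps (p eps x M0)) m ->
      ER_le (Fin a) m.

(** Hypothesis (LD)(iii) gives [kappa > 0] with [rho x y >= kappa] whenever [y] is at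
    sup-distance more than [beta] from [F x]; a point outside [N^delta0(F x)] is such a
    [y] for [beta] small.  By (LD)(v), applied to the complements of the balls of radius
    [delta0/2] around a finite net of the bounded set [F(M)], one gets uniformly
    [beta_delta0(eps) <= exp(-3 kappa / (4 eps))], while (LD0) with [c = kappa/4] gives
    [p^eps(x, M0) >= exp(-kappa / (2 eps))] on a neighbourhood [V0] of [M0].  The ratio
    is then at most [exp(-kappa / (4 eps))], which tends to [0]. *)
From Pilot Require Import Defs.
From Stdlib Require Import Reals.
From Stdlib Require Import Lra Psatz Classical List.
(* [Reals] also exports a [dist] (on metric spaces); re-import [Defs] so [dist] is ours. *)
Import Defs.
Open Scope R_scope.

(** * Euclidean geometry of [Rd d] *)

Lemma sumF_ext n (f g : Fin.t n -> R) : (forall i, f i = g i) -> sumF n f = sumF n g.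
Proof.
  revert f g; induction n as [|n IH]; simpl; intros f g H; auto.
  rewrite H; f_equal; apply IH; auto.
Qed.

Lemma sumF_add n (f g : Fin.t n -> R) : sumF n (fun i => f i + g i) = sumF n f + sumF n g.
Proof. revert f g; induction n as [|n IH]; simpl; intros f g; [lra|]. rewrite IH; lra. Qed.

Lemma sumF_scal n c (f : Fin.t n -> R) : sumF n (fun i => c * f i) = c * sumF n f.
Proof. revert f; induction n as [|n IH]; simpl; intros f; [lra|]. rewrite IH; lra. Qed.

Lemma sumF_nonneg n (f : Fin.t n -> R) : (forall i, 0 <= f i) -> 0 <= sumF n f.
Proof.
  revert f; induction n as [|n IH]; simpl; intros f H; [lra|].
  pose proof (H Fin.F1); pose proof (IH (fun i => f (Fin.FS i)) (fun i => H _)); lra.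
Qed.

Lemma term_le_sumF n (f : Fin.t n -> R) : (forall i, 0 <= f i) -> forall i, f i <= sumF n f.
Proof.
  revert f; induction n as [|n IH]; simpl; intros f H i; [inversion i|].
  apply (Fin.caseS' i (fun i => f i <= f Fin.F1 + sumF n (fun j => f (Fin.FS j)))).
  - pose proof (sumF_nonneg n (fun j => f (Fin.FS j)) (fun j => H _)); lra.
  - intros j. pose proof (IH (fun i => f (Fin.FS i)) (fun i => H _) j).
    pose proof (H Fin.F1); lra.
Qed.

Lemma sumF_Cauchy_Schwarz n (a b : Fin.t n -> R) :
  (sumF n (fun i => a i * b i)) ^ 2 <= sumF n (fun i => a i ^ 2) * sumF n (fun i => b i ^ 2).
Proof.
  revert a b; induction n as [|n IH]; cbn [sumF]; intros a b; [lra|].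
  set (x := a Fin.F1); set (y := b Fin.F1).
  specialize (IH (fun i => a (Fin.FS i)) (fun i => b (Fin.FS i))).
  set (B := sumF n (fun i => a (Fin.FS i) * b (Fin.FS i))) in *.
  set (A := sumF n (fun i => a (Fin.FS i) ^ 2)) in *.
  set (C := sumF n (fun i => b (Fin.FS i) ^ 2)) in *.
  assert (HA : 0 <= A) by (apply sumF_nonneg; intros; nra).
  assert (HC : 0 <= C) by (apply sumF_nonneg; intros; nra).
  assert (cross : 2 * x * y * B <= x * x * C + y * y * A).
  { destruct (Req_dec A 0) as [A0|A0].
    - assert (B = 0) as -> by (rewrite A0 in IH; nra). rewrite A0; nra.
    - (* Lagrange identity for the two-term quadratic form, scaled by A > 0 *)
      assert (A * (x * x * C + y * y * A - 2 * x * y * B)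
              = (y * A - x * B) ^ 2 + x * x * (A * C - B ^ 2)) by ring.
      assert (0 <= (y * A - x * B) ^ 2) by apply pow2_ge_0.
      assert (0 <= x * x * (A * C - B ^ 2)) by (apply Rmult_le_pos; nra).
      assert (0 < A) by lra.
      nra. }
  nra.
Qed.

Lemma enorm_sq {d} (u : Rd d) : enorm u ^ 2 = sumF d (fun i => u i ^ 2).
Proof.
  unfold enorm; rewrite <- Rsqr_pow2; apply Rsqr_sqrt.
  apply sumF_nonneg; intros; nra.
Qed.

Lemma enorm_nonneg {d} (u : Rd d) : 0 <= enorm u.
Proof. apply sqrt_pos. Qed.

Lemma enorm_triangle {d} (u v : Rd d) :
  enorm (fun i => u i + v i) <= enorm u + enorm v.
Proof.
  pose proof (enorm_nonneg u); pose proof (enorm_nonneg v).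
  pose proof (enorm_nonneg (fun i => u i + v i)).
  assert (enorm (fun i => u i + v i) ^ 2 <= (enorm u + enorm v) ^ 2); [|nra].
  rewrite enorm_sq.
  replace (sumF d (fun i => (u i + v i) ^ 2)) with
    (sumF d (fun i => u i ^ 2) + 2 * sumF d (fun i => u i * v i) + sumF d (fun i => v i ^ 2))
    by (rewrite <- sumF_scal, <- !sumF_add; apply sumF_ext; intros; ring).
  pose proof (sumF_Cauchy_Schwarz d u v) as CS; rewrite <- !enorm_sq in *.
  set (B := sumF d (fun i => u i * v i)) in *.
  assert (0 <= enorm u * enorm v) by nra.
  assert (B <= enorm u * enorm v).
  { destruct (Rle_dec B (enorm u * enorm v)) as [|Hgt]; auto.
    assert ((B - enorm u * enorm v) * (B + enorm u * enorm v) > 0)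
      by (apply Rmult_gt_0_compat; lra).
    nra. }
  nra.
Qed.

Lemma dist_triangle {d} (a b c : Rd d) : dist a c <= dist a b + dist b c.
Proof.
  unfold dist.
  replace (enorm (fun i => a i - c i))
    with (enorm (fun i => (a i - b i) + (b i - c i))).
  - apply enorm_triangle.
  - unfold enorm; f_equal; apply sumF_ext; intros; ring.
Qed.

Lemma dist_sym {d} (a b : Rd d) : dist a b = dist b a.
Proof. unfold dist, enorm; f_equal; apply sumF_ext; intros; ring. Qed.

Lemma dist_nonneg {d} (a b : Rd d) : 0 <= dist a b.
Proof. apply sqrt_pos. Qed.

Lemma Rabs_pow2 a : Rabs a ^ 2 = a ^ 2.
Proof. unfold Rabs; destruct (Rcase_abs a); ring. Qed.

Lemma coord_le_enorm {d} (u : Rd d) i : Rabs (u i) <= enorm u.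
Proof.
  pose proof (enorm_nonneg u); pose proof (Rabs_pos (u i)).
  assert (Rabs (u i) ^ 2 <= enorm u ^ 2); [|nra].
  rewrite enorm_sq, Rabs_pow2; apply (term_le_sumF d (fun i => u i ^ 2)); intros; nra.
Qed.

Lemma maxF_nonneg n (f : Fin.t n -> R) : 0 <= maxF n f.
Proof.
  revert f; induction n as [|n IH]; cbn [maxF]; intros f; [lra|].
  pose proof (Rmax_r (f Fin.F1) (maxF n (fun i => f (Fin.FS i)))).
  pose proof (IH (fun i => f (Fin.FS i))); lra.
Qed.

Lemma maxF_le n (f : Fin.t n -> R) h : 0 <= h -> (forall i, f i <= h) -> maxF n f <= h.
Proof.
  revert f; induction n as [|n IH]; cbn [maxF]; intros f Hh H; auto.
  apply Rmax_lub; auto.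
Qed.

Lemma sumF_sq_le_maxF n (f : Fin.t n -> R) : (forall i, 0 <= f i) ->
  sumF n (fun i => f i ^ 2) <= INR n * maxF n f ^ 2.
Proof.
  revert f; induction n as [|n IH]; cbn [sumF maxF]; intros f H; [simpl; lra|].
  specialize (IH (fun i => f (Fin.FS i)) (fun i => H _)).
  pose proof (maxF_nonneg n (fun i => f (Fin.FS i))).
  set (m := maxF n (fun i => f (Fin.FS i))) in *.
  pose proof (H Fin.F1); pose proof (Rmax_l (f Fin.F1) m); pose proof (Rmax_r (f Fin.F1) m).
  rewrite S_INR; pose proof (pos_INR n).
  assert (m ^ 2 <= Rmax (f Fin.F1) m ^ 2) by nra.
  assert (f Fin.F1 ^ 2 <= Rmax (f Fin.F1) m ^ 2) by nra.
  nra.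
Qed.

Lemma dmax_nonneg {d} (x y : Rd d) : 0 <= dmax x y.
Proof. apply maxF_nonneg. Qed.

Lemma dist_sq_le_dmax {d} (x y : Rd d) : dist x y ^ 2 <= INR d * dmax x y ^ 2.
Proof.
  unfold dist; rewrite enorm_sq; unfold dmax.
  eapply Rle_trans; [|apply sumF_sq_le_maxF; intros; apply Rabs_pos].
  right; apply sumF_ext; intros; rewrite Rabs_pow2; reflexivity.
Qed.

Lemma dist_lt_of_dmax_le {d} (u v : Rd d) r :
  0 < r -> dmax u v <= r / (INR d + 1) -> dist u v < r.
Proof.
  intros Hr Hm.
  pose proof (dist_sq_le_dmax u v); pose proof (dmax_nonneg u v);
    pose proof (dist_nonneg u v); pose proof (pos_INR d).
  set (k := INR d + 1) in *.
  assert (Hk : INR d + 1 <= k) by (unfold k; lra).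
  assert (Hs : 0 < r / k) by (apply Rdiv_lt_0_compat; lra).
  set (s := r / k) in *.
  assert (Hr_s : r = k * s) by (unfold s; field; lra).
  assert (dmax u v ^ 2 <= s ^ 2) by nra.
  assert (dist u v ^ 2 < r ^ 2); [|nra].
  assert (INR d * dmax u v ^ 2 <= INR d * s ^ 2) by (apply Rmult_le_compat_l; lra).
  assert (INR d < k * k) by nra.
  assert (INR d * s ^ 2 < (k * k) * s ^ 2) by (apply Rmult_lt_compat_r; nra).
  rewrite Hr_s; replace ((k * s) ^ 2) with ((k * k) * s ^ 2) by ring; lra.
Qed.

(** * Finite nets of cubes *)

Lemma interval_net_aux h (N : nat) s : 0 < h -> 0 <= s <= INR N * h ->
  exists k, (k <= N)%nat /\ Rabs (s - INR k * h) <= h.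
Proof.
  intros Hh; induction N as [|N IH]; intros Hs.
  - exists O; split; auto. simpl in *; rewrite Rmult_0_l in *.
    rewrite Rminus_0_r, Rabs_right; lra.
  - destruct (Rle_dec s (INR N * h)).
    + destruct IH as [k [Hk H]]; [lra|]. exists k; split; auto.
    + exists (S N); split; auto. rewrite S_INR in *; rewrite Rabs_left1; lra.
Qed.

Lemma interval_net Rb h : 0 < h -> exists L : list R, forall t, Rabs t <= Rb ->
  exists s, In s L /\ Rabs (t - s) <= h.
Proof.
  intros Hh; destruct (INR_archimed h (2 * Rb) Hh) as [N HN].
  exists (map (fun k => - Rb + INR k * h) (seq 0 (S N))); intros t Ht.
  assert (- Rb <= t <= Rb) by (unfold Rabs in Ht; destruct (Rcase_abs t); lra).
  destruct (interval_net_aux h N (t + Rb)) as [k [Hk Hkh]]; [lra|lra|].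
  exists (- Rb + INR k * h); split.
  - apply in_map_iff; exists k; split; [reflexivity|apply in_seq; lia].
  - replace (t - (- Rb + INR k * h)) with (t + Rb - INR k * h) by ring; auto.
Qed.

Lemma cube_net {d} Rb h : 0 < h -> exists L : list (Rd d), forall x : Rd d,
  (forall i, Rabs (x i) <= Rb) -> exists g, In g L /\ dmax x g <= h.
Proof.
  intros Hh.
  enough (exists L : list (Rd d), forall x : Rd d, (forall i, Rabs (x i) <= Rb) ->
            exists g, In g L /\ forall i, Rabs (x i - g i) <= h) as [L HL].
  { exists L; intros x Hx; destruct (HL x Hx) as [g [Hg Hxg]].
    exists g; split; auto; apply maxF_le; auto; lra. }
  induction d as [|d IH].
  - exists ((fun _ => 0) :: nil); intros x _.
    exists (fun _ => 0); split; [left; auto|]; intros i; inversion i.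
  - destruct IH as [L HL]; destruct (interval_net Rb h Hh) as [L1 HL1].
    set (cons_pt := fun (t : R) (g : Rd d) (i : Fin.t (S d)) => Fin.caseS' i (fun _ => R) t g).
    exists (flat_map (fun t => map (cons_pt t) L) L1); intros x Hx.
    destruct (HL1 (x Fin.F1) (Hx _)) as [s [Hs1 Hs2]].
    destruct (HL (fun i => x (Fin.FS i)) (fun i => Hx _)) as [g [Hg1 Hg2]].
    exists (cons_pt s g); split.
    + apply in_flat_map; exists s; split; auto; apply in_map; auto.
    + intros i; apply (Fin.caseS' i (fun i => Rabs (x i - cons_pt s g i) <= h)); simpl; auto.
Qed.

Lemma finite_uniform_threshold {A} (P : A -> R -> Prop) (L : list A) :
  (forall a e e', P a e -> 0 < e' <= e -> P a e') ->
  (forall a, In a L -> exists e, 0 < e /\ P a e) ->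
  exists e, 0 < e /\ forall a, In a L -> P a e.
Proof.
  intros Hmono; induction L as [|a L IH]; intros H.
  - exists 1; split; [lra|]; intros a [].
  - destruct (H a (or_introl eq_refl)) as [e1 [He1 P1]].
    destruct IH as [e2 [He2 P2]]; [intros; apply H; right; auto|].
    pose proof (Rmin_l e1 e2); pose proof (Rmin_r e1 e2); pose proof (Rmin_pos e1 e2 He1 He2).
    exists (Rmin e1 e2); split; auto.
    intros b [<-|Hb]; [apply Hmono with e1|apply Hmono with e2]; auto; lra.
Qed.

(** * Extended reals and [eps log p] *)

Lemma is_inf_ER_exists (P : ER -> Prop) : exists m, is_inf_ER P m.
Proof.
  destruct (classic (P MInf)) as [HM|HM].
  { exists MInf; split; [intros v _; exact I|]. intros m' H; apply H; auto. }
  destruct (classic (exists r, P (Fin r))) as [[r0 Hr0]|HF].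
  - destruct (classic (exists lb, forall r, P (Fin r) -> lb <= r)) as [[lb Hlb]|HB].
    + (* the infimum is minus the sup of the negated finite values *)
      destruct (completeness (fun x => P (Fin (- x)))) as [u [Hu1 Hu2]].
      { exists (- lb); intros x Hx; specialize (Hlb _ Hx); lra. }
      { exists (- r0); rewrite Ropp_involutive; auto. }
      exists (Fin (- u)); split.
      * intros [r| |] Hv; simpl; auto.
        assert (Hx : P (Fin (- - r))) by (rewrite Ropp_involutive; auto).
        specialize (Hu1 _ Hx); lra.
      * intros [r| |] H; simpl; auto.
        -- assert (u <= - r); [|lra].
           apply Hu2; intros x Hx; specialize (H _ Hx); simpl in H; lra.
        -- specialize (H _ Hr0); simpl in H; contradiction.
    + exists MInf; split; [intros; exact I|].
      intros [r| |] H; simpl; auto.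
      * apply HB; exists r; intros r' Hr'; apply (H _ Hr').
      * specialize (H _ Hr0); simpl in H; contradiction.
  - exists PInf; split.
    + intros [r| |] Hv; simpl; auto; exfalso; eauto.
    + intros [| |] _; simpl; auto.
Qed.

Lemma ER_le_trans a b c : ER_le a b -> ER_le b c -> ER_le a c.
Proof. destruct a, b, c; simpl; intros; auto; try lra; contradiction. Qed.

Lemma exp_le_compat a b : a <= b -> exp a <= exp b.
Proof. intros [H|H]; [left; apply exp_increasing; auto|subst; lra]. Qed.

Lemma epslog_le_exp eps q r : 0 < eps -> ER_le (epslog eps q) (Fin r) -> q <= exp (r / eps).
Proof.
  intros He; unfold epslog; destruct (Rlt_dec 0 q) as [Hq|Hq]; simpl; intros H.
  - rewrite <- (exp_ln q) by auto; apply exp_le_compat.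
    apply Rmult_le_reg_l with eps; auto; field_simplify; lra.
  - pose proof (exp_pos (r / eps)); lra.
Qed.

Lemma exp_le_of_le_epslog eps q r : 0 < eps -> ER_le (Fin r) (epslog eps q) -> exp (r / eps) <= q.
Proof.
  intros He; unfold epslog; destruct (Rlt_dec 0 q) as [Hq|Hq]; simpl; intros H; [|contradiction].
  rewrite <- (exp_ln q) by auto; apply exp_le_compat.
  apply Rmult_le_reg_l with eps; auto; field_simplify; lra.
Qed.

Lemma epslog_le_negadd eps q m kap eta : 0 < eps ->
  ER_le (epslog eps q) (ER_negadd m eta) -> ER_le (Fin kap) m -> q <= exp ((- kap + eta) / eps).
Proof.
  intros He Hq Hm; apply (epslog_le_exp eps q _ He), (ER_le_trans _ _ _ Hq).
  destruct m; simpl in *; auto; lra.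
Qed.

Lemma borel_closed {d} (C : set d) : closed_set C -> borel C.
Proof.
  intros HC; apply borel_ext with (fun x => ~ ~ C x); [intros; split; [apply NNPP|tauto]|].
  apply borel_compl, borel_open; intros x Hx.
  destruct (classic (exists r, 0 < r /\ forall y, C y -> r <= dist x y)) as [[r [Hr H]]|H].
  - exists r; split; auto; intros y Hy Cy; specialize (H _ Cy); lra.
  - exfalso; apply Hx, HC; intros r Hr; apply NNPP; intros H'.
    apply H; exists r; split; auto; intros y Cy.
    apply Rnot_lt_le; intros Hl; apply H'; eauto.
Qed.

Lemma borel_or {d} (A B : set d) : borel A -> borel B -> borel (fun y => A y \/ B y).
Proof.
  intros HA HB; apply borel_ext with (fun y => exists n, (match n with O => A | _ => B end) y).
  - intros y; split; [intros [[|n] H]; auto|intros [H|H]; [exists O|exists 1%nat]; auto].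
  - apply borel_union; intros [|n]; auto.
Qed.

Lemma borel_and {d} (A B : set d) : borel A -> borel B -> borel (fun y => A y /\ B y).
Proof.
  intros HA HB; apply borel_ext with (fun y => ~ (~ A y \/ ~ B y)).
  - intros y; split; [intros H; split; apply NNPP; tauto|tauto].
  - apply borel_compl, borel_or; apply borel_compl; auto.
Qed.

Lemma borel_empty {d} : borel (fun _ : Rd d => False).
Proof. apply borel_open; intros x []. Qed.

Lemma open_set_ball {d} (c : Rd d) r : open_set (fun y => dist c y < r).
Proof.
  intros x Hx; exists (r - dist c x); split; [lra|]; intros y Hy.
  pose proof (dist_triangle c x y); lra.
Qed.

(** * Markov kernels *)

Lemma infinite_sum_const_0 c l : infinite_sum (fun _ => c) l -> c = 0.
Proof.
  intros H; destruct (Req_dec c 0) as [|Hc]; auto; exfalso.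
  pose proof (Rabs_pos_lt c Hc).
  destruct (H (Rabs c / 4)) as [N HN]; [lra|].
  pose proof (HN N (le_n _)) as H1; pose proof (HN (S N) (le_S _ _ (le_n _))) as H2.
  simpl in H2; unfold Rdist in *.
  set (s := sum_f_R0 (fun _ => c) N) in *.
  assert (Rabs c <= Rabs (s + c - l) + Rabs (s - l)); [|lra].
  replace c with ((s + c - l) + - (s - l)) at 1 by ring.
  eapply Rle_trans; [apply Rabs_triang|]; rewrite Rabs_Ropp; lra.
Qed.

Lemma infinite_sum_two (f : nat -> R) : (forall n, (2 <= n)%nat -> f n = 0) ->
  infinite_sum f (f 0%nat + f 1%nat).
Proof.
  intros Hf e He; exists 1%nat; intros n Hn.
  replace (sum_f_R0 f n) with (f 0%nat + f 1%nat);
    [unfold Rdist; rewrite Rminus_diag, Rabs_R0; lra|].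
  destruct n as [|n]; [lia|]; clear Hn.
  induction n as [|n IH]; [simpl; ring|].
  rewrite IH; change (sum_f_R0 f (S (S n))) with (sum_f_R0 f (S n) + f (S (S n))).
  rewrite (Hf (S (S n))) by lia; ring.
Qed.

Section Kernel.

Variables (d : nat) (M : set d) (p : R -> Rd d -> set d -> R).
Hypothesis HK : markov_kernel M p.
Variables (eps : R) (x : Rd d).
Hypotheses (Heps : 0 < eps) (Mx : M x).

Lemma kernel_nonneg A : borel A -> 0 <= p eps x A.
Proof. apply (HK eps x Heps Mx). Qed.

Lemma kernel_empty : p eps x (fun _ => False) = 0.
Proof.
  destruct (HK eps x Heps Mx) as (_ & _ & _ & _ & Hadd).
  apply infinite_sum_const_0 with (p eps x (fun y => exists _ : nat, False)).
  apply Hadd; [intros; apply borel_empty|intros n m y _ []].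
Qed.

Lemma kernel_additive2 A B : borel A -> borel B -> (forall y, M y -> A y -> B y -> False) ->
  p eps x (fun y => A y \/ B y) = p eps x A + p eps x B.
Proof.
  intros HA HB Hdis; destruct (HK eps x Heps Mx) as (_ & Hext & _ & _ & Hadd).
  set (D := fun n : nat => match n with O => A | 1%nat => B | _ => (fun _ => False) end).
  assert (HD : infinite_sum (fun n => p eps x (D n)) (p eps x (fun y => exists n, D n y))).
  { apply Hadd.
    - intros [|[|n]]; simpl; auto; apply borel_empty.
    - intros [|[|n]] [|[|m]] y Hnm; simpl; try tauto; try lia; eauto. }
  change (p eps x A + p eps x B) with (p eps x (D 0%nat) + p eps x (D 1%nat)).
  assert (Htail : forall n, (2 <= n)%nat -> p eps x (D n) = 0).
  { intros [|[|n]] Hn; [lia|lia|apply kernel_empty]. }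
  rewrite <- (uniqueness_sum _ _ _ HD (infinite_sum_two _ Htail)).
  apply Hext; intros y _; split.
  - intros [H|H]; [exists O|exists 1%nat]; auto.
  - intros [[|[|n]] H]; simpl in H; tauto.
Qed.

Lemma kernel_mono A B : borel A -> borel B -> (forall y, M y -> A y -> B y) ->
  p eps x A <= p eps x B.
Proof.
  intros HA HB Hsub; destruct (HK eps x Heps Mx) as (_ & Hext & _ & _ & _).
  assert (HBA : borel (fun y => B y /\ ~ A y)) by (apply borel_and, borel_compl; auto).
  replace (p eps x B) with (p eps x (fun y => A y \/ (B y /\ ~ A y))).
  - rewrite kernel_additive2; auto; [|tauto].
    pose proof (kernel_nonneg _ HBA); lra.
  - apply Hext; intros y My; split; [intros [H|[H _]]; auto|].
    intros HBy; destruct (classic (A y)); tauto.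
Qed.

End Kernel.

Lemma far_rate_positive {d} (M : set d) (F : Rd d -> Rd d) (rho : Rd d -> Rd d -> ER) :
  (forall beta, 0 < beta -> forall m,
     is_inf_ER (fun v => exists x y, M x /\ M y /\ dmax (F x) y > beta /\ v = rho x y) m ->
     ER_lt (Fin 0) m) ->
  forall beta, 0 < beta -> exists kap, 0 < kap /\
    forall x y, M x -> M y -> beta < dmax (F x) y -> ER_le (Fin kap) (rho x y).
Proof.
  intros Hiii beta Hbeta.
  destruct (is_inf_ER_exists
    (fun v => exists x y, M x /\ M y /\ dmax (F x) y > beta /\ v = rho x y)) as [m Hm].
  assert (Hkap : exists kap, 0 < kap /\ ER_le (Fin kap) m).
  { destruct (Hiii beta Hbeta m Hm) as [H0 Hne]; destruct m as [r| |]; simpl in H0.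
    - exists r; split; simpl; [|lra]; destruct H0; congruence.
    - exists 1; simpl; split; auto; lra.
    - contradiction. }
  destruct Hkap as [kap [Hkap Hkm]]; exists kap; split; auto.
  intros x y Mx My Hxy; apply (ER_le_trans _ _ _ Hkm), (proj1 Hm); exists x, y; auto.
Qed.

Lemma LD0_lower_bound {d} (M M0 : set d) (p : R -> Rd d -> set d -> R) :
  hyp_LD0 M M0 p -> forall c, 0 < c ->
  exists V0, rel_open M V0 /\ (forall x, M0 x -> V0 x) /\
    exists eps0, 0 < eps0 /\ forall eps, 0 < eps < eps0 ->
      forall x, V0 x -> exp (- (2 * c) / eps) <= p eps x M0.
Proof.
  intros HLD0 c Hc; destruct (HLD0 c Hc) as [V0 [HV0 [HM0 Hlim]]].
  destruct (Hlim (- (2 * c))) as [eps0 [Heps0 Hlow]]; [lra|].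
  exists V0; split; [|split]; auto; exists eps0; split; auto.
  intros eps Heps x Vx.
  destruct (is_inf_ER_exists (fun v => exists x, V0 x /\ v = epslog eps (p eps x M0))) as [m Hm].
  apply exp_le_of_le_epslog; [lra|].
  apply (ER_le_trans _ m); [apply (Hlow eps Heps m Hm)|apply (proj1 Hm); eauto].
Qed.

Definition escape_set {d} (M : set d) (F : Rd d -> Rd d) (delta : R) (x : Rd d) : set d :=
  fun y => M y /\ ~ Ndelta M delta (fun z => z = F x) y.

Definition outside_ball {d} (M : set d) (c : Rd d) (r : R) : set d :=
  fun y => M y /\ ~ dist c y < r.

Lemma escape_set_outside_ball {d} (M : set d) F delta x y :
  escape_set M F delta x y <-> outside_ball M (F x) delta y.
Proof.
  unfold escape_set, outside_ball, Ndelta; rewrite (dist_sym (F x) y); split.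
  - intros [My Hn]; split; auto; intros Hl; apply Hn; split; eauto.
  - intros [My Hn]; split; auto; intros [_ [z [-> Hz]]]; auto.
Qed.

Lemma rel_closed_outside_ball {d} (M : set d) c r : rel_closed M (outside_ball M c r).
Proof.
  split; [intros x [H _]; auto|]; intros x Mx H; split; auto; intros Hl.
  destruct (H (r - dist c x)) as [y [[My Hy] Hxy]]; [lra|].
  apply Hy; pose proof (dist_triangle c x y); lra.
Qed.

Lemma borel_outside_ball {d} (M : set d) c r : closed_set M -> borel (outside_ball M c r).
Proof.
  intros HM; apply borel_and; [apply borel_closed; auto|].
  apply borel_compl, borel_open, open_set_ball.
Qed.

Lemma borel_escape_set {d} (M : set d) F delta x : closed_set M -> borel (escape_set M F delta x).
Proof.
  intros HM; apply borel_ext with (outside_ball M (F x) delta).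
  - intros y; symmetry; apply escape_set_outside_ball.
  - apply borel_outside_ball; auto.
Qed.

Section EscapeBound.

Variables (d : nat) (M : set d) (F : Rd d -> Rd d).
Variables (p : R -> Rd d -> set d -> R) (rho : Rd d -> Rd d -> ER).
Hypotheses (HMcl : closed_set M) (HK : markov_kernel M p).
Variable B : R.
Hypothesis HFB : forall x, M x -> enorm (F x) <= B.
Hypothesis HLDv : forall C, rel_closed M C -> forall eta, 0 < eta ->
   exists eps0, 0 < eps0 /\ forall eps, 0 < eps < eps0 -> forall x, M x ->
   forall m, is_inf_ER (fun v => exists y, C y /\ v = rho x y) m ->
   ER_le (epslog eps (p eps x C)) (ER_negadd m eta).
Variables (delta kap : R).
Hypothesis Hdelta : 0 < delta.
Hypothesis Hrho : forall x y, M x -> M y ->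
  delta / 4 / (INR d + 1) < dmax (F x) y -> ER_le (Fin kap) (rho x y).

Lemma escape_set_sub_outside_ball x g y : dist (F x) g < delta / 4 ->
  escape_set M F delta x y -> outside_ball M g (delta / 2) y.
Proof.
  intros Hg Hy; apply escape_set_outside_ball in Hy; destruct Hy as [My Hy].
  split; auto; pose proof (dist_triangle (F x) g y); lra.
Qed.

Lemma outside_ball_far x g y : dist (F x) g < delta / 4 ->
  outside_ball M g (delta / 2) y -> delta / 4 / (INR d + 1) < dmax (F x) y.
Proof.
  intros Hg [_ Hy]; apply Rnot_le_lt; intros Hle.
  pose proof (dist_lt_of_dmax_le (F x) y (delta / 4) ltac:(lra) Hle).
  rewrite dist_sym in Hg; pose proof (dist_triangle g (F x) y); lra.
Qed.

(* (v) is applied to the finitely many closed sets [outside_ball M g (delta/2)], [g] in a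
   net of the cube containing [F(M)], which gives a threshold uniform in [x]. *)
Lemma escape_prob_le eta : 0 < eta ->
  exists eps0, 0 < eps0 /\ forall eps, 0 < eps < eps0 -> forall x, M x ->
    p eps x (escape_set M F delta x) <= exp ((- kap + eta) / eps).
Proof.
  intros Heta.
  assert (Hbeta : 0 < delta / 4 / (INR d + 1))
    by (pose proof (pos_INR d); apply Rdiv_lt_0_compat; lra).
  destruct (cube_net (d := d) B _ Hbeta) as [L HL].
  destruct (finite_uniform_threshold (fun g e0 => forall eps, 0 < eps < e0 -> forall x, M x ->
     forall m, is_inf_ER (fun v => exists y, outside_ball M g (delta / 2) y /\ v = rho x y) m ->
     ER_le (epslog eps (p eps x (outside_ball M g (delta / 2)))) (ER_negadd m eta)) L)
    as [eps0 [Heps0 Hv]].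
  { intros g e e' H [H1 H2] eps Heps; apply H; lra. }
  { intros g _; apply (HLDv _ (rel_closed_outside_ball M g (delta / 2)) eta Heta). }
  exists eps0; split; auto; intros eps Heps x Mx.
  destruct (HL (F x)) as [g [Hg HFg]].
  { intros i; pose proof (coord_le_enorm (F x) i); pose proof (HFB x Mx); lra. }
  apply (dist_lt_of_dmax_le _ _ (delta / 4)) in HFg; [|lra].
  apply Rle_trans with (p eps x (outside_ball M g (delta / 2))).
  { apply (kernel_mono d M p HK eps x ltac:(lra) Mx);
      [apply borel_escape_set|apply borel_outside_ball|]; auto.
    intros y _; apply (escape_set_sub_outside_ball x); auto. }
  destruct (is_inf_ER_exists
    (fun v => exists y, outside_ball M g (delta / 2) y /\ v = rho x y)) as [m Hm].
  apply (epslog_le_negadd eps _ m); [lra|apply (Hv g Hg eps Heps x Mx m Hm)|].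
  apply (proj2 Hm); intros v [y [Hy ->]].
  apply Hrho; [auto|apply Hy|apply (outside_ball_far x g); auto].
Qed.

End EscapeBound.

Lemma exp_neg_div_lt a e : 0 < a -> 0 < e ->
  exists eps0, 0 < eps0 /\ forall eps, 0 < eps < eps0 -> exp (- a / eps) < e.
Proof.
  intros Ha He; pose proof (Rabs_pos (ln e)).
  exists (a / (Rabs (ln e) + 1)); split; [apply Rdiv_lt_0_compat; lra|].
  intros eps [Heps Hlt]; rewrite <- (exp_ln e) by auto; apply exp_increasing.
  assert (eps * (Rabs (ln e) + 1) < a).
  { apply Rmult_lt_reg_r with (/ (Rabs (ln e) + 1)); [apply Rinv_0_lt_compat; lra|].
    rewrite Rmult_assoc, Rinv_r, Rmult_1_r by lra; auto. }
  pose proof (Rle_abs (- ln e)); rewrite Rabs_Ropp in *.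
  apply Rmult_lt_reg_l with eps; auto.
  replace (eps * (- a / eps)) with (- a) by (field; lra); nra.
Qed.

Lemma is_lub_inhabited (E : R -> Prop) b : is_lub E b -> exists v, E v.
Proof.
  intros [_ Hb]; apply NNPP; intros Hne.
  assert (b <= b - 1); [apply Hb; intros v Hv; exfalso; eauto|lra].
Qed.

Lemma ratio_lt b I l u e : 0 < l -> 0 <= b -> b <= u -> l <= I -> u < e * l ->
  0 < I /\ Rabs (b / I) < e.
Proof.
  intros Hl Hb Hbu HlI Hu; assert (HI : 0 < I) by lra; split; auto.
  rewrite Rabs_right by (apply Rle_ge, Rmult_le_pos; [|left; apply Rinv_0_lt_compat]; lra).
  apply Rmult_lt_reg_r with I; auto; unfold Rdiv.
  rewrite Rmult_assoc, Rinv_l, Rmult_1_r by lra.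
  assert (e * l <= e * I); [apply Rmult_le_compat_l; nra|lra].
Qed.

Theorem mainTheorem10 (d : nat) (M M0 M1 : set d) (F : Rd d -> Rd d)
  (p : R -> Rd d -> set d -> R) (rho : Rd d -> Rd d -> ER) :
  setting M M0 M1 F ->
  markov_kernel M p ->
  (forall eps x, 0 < eps -> M0 x -> p eps x M1 = 0) ->
  hyp_LD M M0 M1 F p rho ->
  hyp_LD0 M M0 p ->
  forall delta0, 0 < delta0 ->
  exists V0, rel_open M V0 /\ (forall x, M0 x -> V0 x) /\
    forall e, 0 < e -> exists eps0, 0 < eps0 /\ forall eps, 0 < eps < eps0 ->
      forall b I, is_beta M F p delta0 eps b ->
        is_glb_R (fun v => exists x, V0 x /\ v = p eps x M0) I ->
        0 < I /\ Rabs (b / I) < e.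
Proof.
  intros Hset HK _ HLD HLD0 delta0 Hd0.
  destruct Hset as (HMcl & _ & _ & [B HB] & _).
  destruct HLD as (_ & _ & _ & Hiii & _ & Hv).
  assert (Hbeta : 0 < delta0 / 4 / (INR d + 1))
    by (pose proof (pos_INR d); apply Rdiv_lt_0_compat; lra).
  destruct (far_rate_positive M F rho Hiii _ Hbeta) as (kap & Hkap & Hrho).
  destruct (LD0_lower_bound M M0 p HLD0 (kap / 4)) as (V0 & HV0 & HM0 & eps1 & Heps1 & Hlow);
    [lra|].
  exists V0; split; [|split]; auto; intros e He.
  destruct (escape_prob_le d M F p rho HMcl HK B HB Hv delta0 kap Hd0 Hrho (kap / 4))
    as (eps2 & Heps2 & Hup); [lra|].
  destruct (exp_neg_div_lt (kap / 4) e) as (eps3 & Heps3 & Hsmall); [lra|auto|].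
  exists (Rmin eps1 (Rmin eps2 eps3)); split; [repeat apply Rmin_pos; auto|].
  intros eps Heps b I Hb HI.
  pose proof (Rmin_l eps1 (Rmin eps2 eps3)); pose proof (Rmin_r eps1 (Rmin eps2 eps3));
    pose proof (Rmin_l eps2 eps3); pose proof (Rmin_r eps2 eps3).
  apply (ratio_lt b I (exp (- (2 * (kap / 4)) / eps)) (exp ((- kap + kap / 4) / eps))).
  - apply exp_pos.
  - destruct (is_lub_inhabited _ _ Hb) as [v [x [Mx ->]]].
    apply Rle_trans with (p eps x (escape_set M F delta0 x)); [|apply Hb; eauto].
    apply kernel_nonneg with M; [auto|lra|auto|apply borel_escape_set; auto].
  - apply Hb; intros v [x [Mx ->]]; apply Hup; auto; lra.
  - apply HI; intros v [x [Vx ->]]; apply Hlow; auto; lra.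
  - replace ((- kap + kap / 4) / eps) with (- (kap / 4) / eps + - (2 * (kap / 4)) / eps)
      by (field; lra).
    rewrite exp_plus; apply Rmult_lt_compat_r; [apply exp_pos|apply Hsmall; lra].
Qed.
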